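(* For every integer $n\ge 1$ and every real $x$, $$W^{(1)}_{n}(x)=(-2)^{\frac{n(n-1)}{2}}\,\sin^{\frac{n(n+1)}{2}}(x)\,G(n+1)\,2n\cos(x).$$
   Context: For smooth functions $f_1,\dots,f_n$ of a real variable $x$, $\mathrm{Wr}\{f_1,\dots,f_n\}$ denotes the determinant of the $n\times n$ matrix with $(i,j)$ entry $f_j^{(i-1)}(x)$. Define $W^{(1)}_1(x):=\sin(2x)$ and, for $n\ge2$, $W^{(1)}_n(x):=\mathrm{Wr}\{\sin(x),\sin(2x),\dots,\sin((n-1)x),\sin((n+1)x)\}$. Here $G(n+1)=\prod_{j=0}^{n-1}j!$. *)

From mathcomp Require Import all_boot all_order all_algebra.
From mathcomp Require Import all_classical all_reals all_analysis.
Set Implicit Arguments. Unset Strict Implicit. Unset Printing Implicit Defensive.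
Import Order.TTheory GRing.Theory Num.Theory.
Local Open Scope ring_scope.

Definition wronskian (R : realType) (n : nat) (f : 'I_n -> R -> R) (x : R) : R :=
  \det (\matrix_(i < n, j < n) derive1n i (f j) x).

Definition W1_freq (n : nat) (j : 'I_n) : nat :=
  if (j < n.-1)%N then j.+1 else n.+1.

Definition W1 (R : realType) (n : nat) (x : R) : R :=
  if n == 1%N then sin (2 * x)
  else wronskian (fun j : 'I_n => fun t : R => sin ((W1_freq j)%:R * t)) x.

Definition barnesG_succ (n : nat) : nat := (\prod_(j < n) j`!)%N.

From HB Require Import structures.
From mathcomp Require Import all_boot all_order all_algebra.
From mathcomp Require Import all_classical all_reals all_analysis.
From mathcomp Require Import ring zify.
Import Order.TTheory GRing.Theory Num.Theory.
Set Implicit Arguments.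
Unset Strict Implicit.
Unset Printing Implicit Defensive.
Local Open Scope ring_scope.

(* Write sin((k+1) t) = sin t * U_k(cos t) with the Chebyshev polynomials U_k of
   the second kind.  For any derivation, the Leibniz rule makes the passage from
   (d^i (a * x_j))_(i,j) to (x_j^(i))_(i,j) a triangular change of basis, so
   multiplying all functions by sin scales the Wronskian by sin^n and the
   substitution c = cos t scales it by (dc/dt)^(n(n-1)/2) = (-sin)^(n(n-1)/2).
   What is left is the Wronskian of U_0, ..., U_(n-2), U_n in c; by degree and
   parity these are a triangular combination, with diagonal 2^k, of the
   monomials c^0, ..., c^(n-2), c^n, whose Wronskian is 0! 1! ... (n-2)! n! c. *)

Lemma nat_ind2 (P : nat -> Prop) :
  P 0%N -> P 1%N -> (forall k, P k -> P k.+1 -> P k.+2) -> forall k, P k.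
Proof.
move=> P0 P1 PSS k; suff [] : P k /\ P k.+1 by [].
by elim: k => [|k [Pk PSk]]; split; last exact: PSS.
Qed.

Section IteratedDerivation.
Variables (A : comPzRingType) (d : {additive A -> A}).
Hypothesis derivM : forall x y, d (x * y) = d x * y + x * d y.

(* The coefficient of [x l] in [d^i (a * x 0)] whenever [d (x l) = x l.+1 * e]. *)
Fixpoint leibniz_coef (a e : A) (i l : nat) : A :=
  if i is i'.+1 then
    d (leibniz_coef a e i' l) +
    (if l is l'.+1 then leibniz_coef a e i' l' * e else 0)
  else if l == 0%N then a else 0.

Lemma leibniz_coef_gt a e i l : (i < l)%N -> leibniz_coef a e i l = 0.
Proof.
elim: i l => [|i IH] [|l] //=; rewrite ltnS => lt_il.
by rewrite (IH l lt_il) (IH l.+1 (ltnW lt_il)) raddf0 mul0r addr0.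
Qed.

Lemma leibniz_coef_diag a e i : leibniz_coef a e i i = a * e ^+ i.
Proof.
elim: i => [|i IH] /=; first by rewrite mulr1.
by rewrite (leibniz_coef_gt a e (ltnSn i)) raddf0 add0r IH exprSr mulrA.
Qed.

Lemma iter_derivation_mul a e (x : nat -> A) N i :
  (forall l, d (x l) = x l.+1 * e) -> (i < N)%N ->
  iter i d (a * x 0%N) = \sum_(l < N) leibniz_coef a e i l * x l.
Proof.
move=> dx; case: N => // N; elim: i => [_|i IH lt_iN].
  by rewrite big_ord_recl big1 ?addr0 // => l _; rewrite mul0r.
have lt_iN' : (i < N)%N by rewrite -ltnS.
rewrite iterS (IH (ltnW lt_iN)) raddf_sum.
under eq_bigr do rewrite derivM dx mulrA.
under [RHS]eq_bigr do rewrite mulrDl.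
rewrite !big_split; congr (_ + _).
rewrite big_ord_recr /= (leibniz_coef_gt a e lt_iN') !mul0r addr0.
rewrite big_ord_recl /= mul0r add0r.
by apply: eq_bigr => l _; rewrite mulrAC.
Qed.

Lemma det_iter_derivation_mul n a e (x : 'I_n -> nat -> A) :
  (forall j l, d (x j l) = x j l.+1 * e) ->
  \det (\matrix_(i < n, j < n) iter i d (a * x j 0%N)) =
  a ^+ n * e ^+ 'C(n, 2) * \det (\matrix_(i < n, j < n) x j i).
Proof.
move=> dx.
have -> : \matrix_(i < n, j < n) iter i d (a * x j 0%N) =
    (\matrix_(i < n, l < n) leibniz_coef a e i l) *m \matrix_(l < n, j < n) x j l.
  apply/matrixP => i j; rewrite !mxE (iter_derivation_mul a (dx j) (ltn_ord i)).
  by apply: eq_bigr => l _; rewrite !mxE.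
rewrite det_mulmx det_trig; last first.
  by apply/is_trig_mxP => i l lt_il; rewrite mxE leibniz_coef_gt.
under eq_bigr do rewrite mxE leibniz_coef_diag.
by rewrite big_split /= prodr_const card_ord prodrXr -bin2_sum big_mkord.
Qed.

End IteratedDerivation.

Section TrigPolynomials.
Variable R : comNzRingType.
Local Notation A := {poly {poly R}}.

(* Trigonometric polynomials: in [A] the variable ['X] stands for [cos t] and
   ['Y = 'X%:P] for [sin t], so that [trig_deriv] is d/dt by sin' = cos and
   cos' = - sin. *)
Definition deriv_coef (P : A) : A := map_poly (@deriv R) P.

Lemma deriv_coefM (P Q : A) :
  deriv_coef (P * Q) = deriv_coef P * Q + P * deriv_coef Q.
Proof.
apply/polyP => i.
rewrite /deriv_coef coef_map /= coefM raddf_sum coefD !coefM -big_split.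
by apply: eq_bigr => j _ /=; rewrite derivM !coef_map.
Qed.

Lemma deriv_coef_map_polyC (q : {poly R}) : deriv_coef q^:P = 0.
Proof. by apply/polyP => i; rewrite !coef_map /= derivC coef0. Qed.

Definition trig_deriv (P : A) : A := 'X * deriv_coef P - 'Y * P^`().

Lemma trig_deriv_is_zmod_morphism : zmod_morphism trig_deriv.
Proof. by move=> P Q; rewrite /trig_deriv /deriv_coef !raddfB /=; ring. Qed.

HB.instance Definition _ :=
  GRing.isZmodMorphism.Build A A trig_deriv trig_deriv_is_zmod_morphism.

Lemma trig_derivM (P Q : A) :
  trig_deriv (P * Q) = trig_deriv P * Q + P * trig_deriv Q.
Proof. by rewrite /trig_deriv deriv_coefM derivM; ring. Qed.

Lemma trig_derivX : trig_deriv 'X = - 'Y.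
Proof.
rewrite /trig_deriv derivX mulr1 (_ : deriv_coef 'X = 0) ?mulr0 ?sub0r //.
by rewrite -[X in deriv_coef X](map_polyX (@polyC R)) deriv_coef_map_polyC.
Qed.

Lemma trig_derivC (c : {poly R}) : trig_deriv c%:P = 'X * c^`()%:P.
Proof. by rewrite /trig_deriv derivC mulr0 subr0 /deriv_coef map_polyC. Qed.

Lemma trig_deriv_map_polyC (q : {poly R}) : trig_deriv q^:P = q^`()^:P * - 'Y.
Proof.
by rewrite /trig_deriv deriv_coef_map_polyC mulr0 sub0r deriv_map mulrN mulrC.
Qed.

Lemma det_trig_deriv_sin_mul n (q : 'I_n -> {poly R}) :
  \det (\matrix_(i < n, j < n) iter i trig_deriv ('Y * (q j)^:P)) =
  'Y ^+ n * (- 'Y) ^+ 'C(n, 2) * (\det (\matrix_(i < n, j < n) (q j)^`(i)))^:P.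
Proof.
rewrite (@det_iter_derivation_mul _ _ trig_derivM n 'Y 1
  (fun j l => iter l trig_deriv (q j)^:P)) => [|j l]; last by rewrite mulr1.
rewrite expr1n mulr1 -mulrA; congr (_ * _).
have -> : \matrix_(i < n, j < n) iter i trig_deriv (q j)^:P =
    \matrix_(i < n, j < n) iter i trig_deriv (1 * (q j)^:P).
  by apply/matrixP => i j; rewrite !mxE mul1r.
rewrite (@det_iter_derivation_mul _ _ trig_derivM n 1 (- 'Y)
  (fun j l => ((q j)^`(l))^:P)) => [|j l]; last first.
  by rewrite /= trig_deriv_map_polyC.
rewrite expr1n mul1r -det_map_mx; congr (_ * \det _).
by apply/matrixP => i j; rewrite !mxE.
Qed.

End TrigPolynomials.

Arguments trig_deriv {R} P.

Section Chebyshev.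
Variable R : nzRingType.

Fixpoint chebU (k : nat) : {poly R} :=
  match k with
  | 0 => 1
  | 1 => 'X *+ 2
  | (k'.+1 as k1).+1 => 'X * chebU k1 *+ 2 - chebU k'
  end.

Lemma chebUSS k : chebU k.+2 = 'X * chebU k.+1 *+ 2 - chebU k.
Proof. by []. Qed.

Lemma coef_chebUSS k i :
  (chebU k.+2)`_i = (if i is i'.+1 then (chebU k.+1)`_i' *+ 2 else 0) - (chebU k)`_i.
Proof. by rewrite chebUSS coefB coefMn coefXM; case: i; rewrite ?mul0rn. Qed.

Lemma coef_chebU_gt k i : (k < i)%N -> (chebU k)`_i = 0.
Proof.
elim/nat_ind2: k i => [||k IHk IHk1] [|[|i]] // lt_ki;
  rewrite ?coef1 ?coefMn ?coefX ?mul0rn //.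
move: lt_ki; rewrite !ltnS => lt_ki.
rewrite coef_chebUSS (IHk1 i.+1 lt_ki) (IHk i.+2 (leqW (ltnW lt_ki))).
by rewrite mul0rn subr0.
Qed.

Lemma coef_chebU_diag k : (chebU k)`_k = 2 ^+ k.
Proof.
elim/nat_ind2: k => [||k IHk IHk1]; first by rewrite coef1.
- by rewrite coefMn coefX.
rewrite coef_chebUSS IHk1 (@coef_chebU_gt k k.+2 (ltnW (ltnSn k.+1))) subr0.
by rewrite [in RHS]exprS mulr_natl.
Qed.

Lemma coef_chebU_odd k i : odd (k + i) -> (chebU k)`_i = 0.
Proof.
elim/nat_ind2: k i => [||k IHk IHk1] i odd_ki.
- by case: i odd_ki => [|i] //; rewrite coef1.
- by case: i odd_ki => [|[|i]] //; rewrite coefMn coefX /= mul0rn.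
rewrite coef_chebUSS (IHk i) ?subr0; last by rewrite !addSn /= negbK in odd_ki.
case: i odd_ki => [|i] // odd_ki.
have odd_k1i : odd (k.+1 + i) by move: odd_ki; rewrite !addSn addnS /= !negbK.
by rewrite (IHk1 i odd_k1i) mul0rn.
Qed.

End Chebyshev.

(* The frequency [k + 1] of the Wronskian W1 gives the Chebyshev index [k]:
   [cheb_exp] runs through [0, ..., n - 2, n]. *)
Definition cheb_exp n (j : 'I_n) : nat := (W1_freq j).-1.

Lemma cheb_expE n (j : 'I_n) : cheb_exp j = if (j < n.-1)%N then nat_of_ord j else n.
Proof. by rewrite /cheb_exp /W1_freq; case: ifP. Qed.

Lemma W1_freqE n (j : 'I_n) : W1_freq j = (cheb_exp j).+1.
Proof. by rewrite /cheb_exp /W1_freq; case: ifP. Qed.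

Lemma cheb_exp_ltn n (j m : 'I_n) : (j < m)%N -> (cheb_exp j < cheb_exp m)%N.
Proof. by rewrite !cheb_expE; have := ltn_ord m; case: ifP; case: ifP; lia. Qed.

Lemma cheb_exp_widen p (m : 'I_p) : cheb_exp (widen_ord (leqnSn p) m) = m.
Proof. by rewrite cheb_expE /= ltn_ord. Qed.

Lemma cheb_exp_max p : cheb_exp (@ord_max p) = p.+1.
Proof. by rewrite cheb_expE /= ltnn. Qed.

Lemma sum_cheb_exp p : (\sum_(m < p.+1) cheb_exp m)%N = 'C(p.+1, 2).+1.
Proof.
rewrite big_ord_recr /= cheb_exp_max.
under eq_bigr do rewrite cheb_exp_widen.
by rewrite binS bin1 -bin2_sum big_mkord addnS.
Qed.

Section ChebyshevWronskian.
Variable R : comNzRingType.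

Lemma chebU_cheb_exp_expansion p (j : 'I_p.+1) :
  chebU R (cheb_exp j) =
  \sum_(m < p.+1) (chebU R (cheb_exp j))`_(cheb_exp m) *: 'X^(cheb_exp m).
Proof.
set U := chebU R (cheb_exp j).
have U_gt i : (p.+1 < i)%N -> U`_i = 0.
  move=> lt_pi; apply: coef_chebU_gt; apply: leq_ltn_trans lt_pi.
  by rewrite cheb_expE; case: ifP => //= _; apply: ltnW.
have U_p : U`_p = 0.
  move: (cheb_expE j) => /=; case: ifP => [lt_jp|_] e_j.
    by apply: coef_chebU_gt; rewrite e_j.
  by apply: coef_chebU_odd; rewrite e_j addSn /= addnn odd_double.
rewrite {1}(_ : U = \sum_(i < p.+2) U`_i *: 'X^i); last first.
  rewrite -poly_def; apply/polyP => i; rewrite coef_poly.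
  by case: ltnP => // /U_gt.
rewrite 2!big_ord_recr /= U_p scale0r addr0 [RHS]big_ord_recr /= cheb_exp_max.
by congr (_ + _); apply: eq_bigr => m _; rewrite cheb_exp_widen.
Qed.

Lemma det_coef_chebU p :
  \det (\matrix_(m < p.+1, j < p.+1) (chebU R (cheb_exp j))`_(cheb_exp m)) =
  2 ^+ 'C(p.+1, 2).+1.
Proof.
rewrite -det_tr det_trig; last first.
  apply/is_trig_mxP => j m lt_jm; rewrite !mxE.
  exact/coef_chebU_gt/cheb_exp_ltn.
under eq_bigr do rewrite !mxE coef_chebU_diag.
by rewrite prodrXr sum_cheb_exp.
Qed.

Lemma det_deriv_cheb_monomials p :
  \det (\matrix_(i < p.+1, m < p.+1) ('X^(cheb_exp m) : {poly R})^`(i)) =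
  (barnesG_succ p.+1 * p.+1)%:R *: 'X.
Proof.
rewrite -det_tr det_trig; last first.
  apply/is_trig_mxP => m i lt_mi.
  have lt_em_i : (cheb_exp m < i)%N.
    move: (ltn_ord i) (ltn_ord m) lt_mi.
    by rewrite cheb_expE /=; case: (ltnP m p); lia.
  by rewrite !mxE derivnXn (ffact_small lt_em_i) mulr0n.
rewrite big_ord_recr /= !mxE cheb_exp_max derivnXn subSnn.
under eq_bigr do rewrite !mxE cheb_exp_widen derivnXn subnn expr0 ffactnn.
have ffact_max : (p.+1 ^_ p = p.+1`!)%N.
  by rewrite -(ffact_fact (leqnSn p)) subSnn muln1.
rewrite /= ffact_max expr1 /barnesG_succ big_ord_recr /= scaler_nat.
by rewrite -natr_prod mulr_natl -mulrnA factS mulnC (mulnC p.+1) mulnA.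
Qed.

Lemma det_deriv_chebU p :
  \det (\matrix_(i < p.+1, j < p.+1) (chebU R (cheb_exp j))^`(i)) =
  (2 ^+ 'C(p.+1, 2).+1 * (barnesG_succ p.+1 * p.+1)%:R)%:P * 'X.
Proof.
have -> : \matrix_(i < p.+1, j < p.+1) (chebU R (cheb_exp j))^`(i) =
    (\matrix_(i < p.+1, m < p.+1) ('X^(cheb_exp m) : {poly R})^`(i)) *m
    map_mx polyC (\matrix_(m < p.+1, j < p.+1) (chebU R (cheb_exp j))`_(cheb_exp m)).
  apply/matrixP => i j; rewrite !mxE {1}chebU_cheb_exp_expansion raddf_sum.
  by apply: eq_bigr => m _; rewrite !mxE /= derivnZ mulrC mul_polyC.
rewrite det_mulmx det_map_mx det_deriv_cheb_monomials det_coef_chebU.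
by rewrite /= -mul_polyC polyCM mulrAC [_%:P * _%:P]mulrC.
Qed.

End ChebyshevWronskian.

Section TrigEval.
Variable R : realType.

Definition trig_eval (t : R) : {rmorphism {poly {poly R}} -> R} :=
  horner_eval (cos t) \o map_poly (horner_eval (sin t)).

Lemma trig_evalX t : trig_eval t 'X = cos t.
Proof. by rewrite /= map_polyX horner_evalE hornerX. Qed.

Lemma trig_evalC t (c : {poly R}) : trig_eval t c%:P = c.[sin t].
Proof. by rewrite /= map_polyC horner_evalE hornerC. Qed.

Lemma trig_eval_map_polyC t (q : {poly R}) : trig_eval t q^:P = q.[cos t].
Proof.
rewrite /= horner_evalE; congr (_.[_]).
by apply/polyP => i; rewrite !coef_map /= horner_evalE hornerC.
Qed.

Lemma is_derive_trig_eval (P : {poly {poly R}}) (t : R) :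
  is_derive t (1 : R) (fun u => trig_eval u P) (trig_eval t (trig_deriv P)).
Proof.
elim/poly_ind: P t => [|Q c IH] t.
  rewrite raddf0 rmorph0 (_ : (fun u => trig_eval u 0) = cst 0).
    exact: is_derive_cst.
  by apply/funext => u; rewrite rmorph0.
have -> : (fun u => trig_eval u (Q * 'X + c%:P)) =
    (fun u => trig_eval u Q) * cos + (horner c \o sin).
  by apply/funext => u; rewrite rmorphD rmorphM trig_evalX trig_evalC.
apply: (is_derive_eq (is_deriveD (is_deriveM (IH t) (is_derive_cos t))
  (is_derive1_comp (is_derive_poly c (sin t)) (is_derive_sin t)))).
have -> : trig_deriv (Q * 'X + c%:P) = trig_deriv Q * 'X - Q * 'Y + 'X * c^`()%:P.
  by rewrite raddfD /= trig_derivM trig_derivX trig_derivC mulrN.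
set dQ := trig_eval t (trig_deriv Q).
rewrite !rmorphD rmorphN !rmorphM trig_evalX !trig_evalC hornerX.
by rewrite /GRing.scale /= /dQ; ring.
Qed.

Lemma derive1n_trig_eval i (P : {poly {poly R}}) :
  derive1n i (fun u => trig_eval u P) = fun u => trig_eval u (iter i trig_deriv P).
Proof.
elim: i => [|i IH]; first by rewrite derive1n0.
rewrite derive1nS IH; apply/funext => u; rewrite derive1E.
by have [_ ->] := is_derive_trig_eval (iter i trig_deriv P) u.
Qed.

Lemma sin_chebU k (t : R) : sin (k.+1%:R * t) = sin t * (chebU R k).[cos t].
Proof.
have shift m : m.+1%:R * t = m%:R * t + t by rewrite -addn1 natrD mulrDl mul1r.
elim/nat_ind2: k => [||k IHk IHk1].
- by rewrite mul1r hornerC mulr1.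
- by rewrite hornerMn hornerX shift mul1r sinD -mulr_natl; ring.
set a := k.+2%:R * t in IHk1 *.
have sin_a_sub : sin a * cos t - cos a * sin t = sin t * (chebU R k).[cos t].
  by rewrite -sinB -IHk /a shift addrK.
rewrite shift -/a sinD chebUSS hornerD hornerN hornerMn hornerM hornerX.
have -> : cos a * sin t = sin a * cos t - sin t * (chebU R k).[cos t].
  by rewrite -sin_a_sub; ring.
by rewrite IHk1 -mulr_natl; ring.
Qed.

Lemma wronskian_sin_freq n (x : R) :
  wronskian (fun j t => sin ((@W1_freq n j)%:R * t)) x =
  trig_eval x (\det (\matrix_(i < n, j < n)
    iter i trig_deriv ('Y * (chebU R (cheb_exp j))^:P))).
Proof.
rewrite /wronskian -det_map_mx; congr (\det _).
apply/matrixP => i j; rewrite !mxE.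
suff -> : (fun t => sin ((W1_freq j)%:R * t)) =
    fun t => trig_eval t ('Y * (chebU R (cheb_exp j))^:P).
  by rewrite derive1n_trig_eval.
apply/funext => t.
by rewrite W1_freqE sin_chebU rmorphM trig_evalC hornerX trig_eval_map_polyC.
Qed.

Lemma W1E n (x : R) : (0 < n)%N ->
  W1 n x = wronskian (fun j t => sin ((@W1_freq n j)%:R * t)) x.
Proof. by rewrite /W1; case: eqP => // -> _; rewrite /wronskian det_mx11 mxE. Qed.

End TrigEval.

Theorem lemma1 (R : realType) (n : nat) (x : R) : (1 <= n)%N ->
  W1 n x = (-2) ^+ ((n * (n - 1)) %/ 2) * (sin x) ^+ ((n * (n + 1)) %/ 2)
           * (barnesG_succ n)%:R * (2 * n%:R) * cos x.
Proof.
case: n => [//|p] _.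
rewrite W1E // wronskian_sin_freq det_trig_deriv_sin_mul det_deriv_chebU.
rewrite rmorphM trig_eval_map_polyC hornerM hornerC hornerX.
rewrite rmorphM !rmorphXn rmorphN trig_evalC hornerX.
have -> : ((p.+1 * (p.+1 - 1)) %/ 2 = 'C(p.+1, 2))%N by rewrite bin2 subn1 divn2.
have -> : ((p.+1 * (p.+1 + 1)) %/ 2 = 'C(p.+1, 2) + p.+1)%N.
  by rewrite addn1 divn2 mulnC -bin2 binS bin1.
set C := 'C(p.+1, 2).
rewrite [sin x ^+ (C + _)]exprD (exprS (2 : R) C).
by rewrite (exprNn (sin x)) (exprNn (2 : R)) natrM; ring.
Qed.
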